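(* Let $m\ge 1$ be an integer, $\Gamma_1,\Gamma_2$ co-prime integers with $1<\Gamma_1<\Gamma_2$, $m_1=m\Gamma_1$, $m_2=m\Gamma_2$, and $\sigma_1=|\Gamma_2|_{\Gamma_1}\ge 2$. Let $N$ be an integer with $0\le N< m_1\left(1+\lfloor m_2/m_1\rfloor\lfloor m_1/|m_2|_{m_1}\rfloor\right)$, with remainders $r_i=|N|_{m_i}$, and let $\tilde r_1,\tilde r_2$ be erroneous remainders whose errors $\Delta r_i=\tilde r_i-r_i$ satisfy $$-\frac{\sigma_1}{2}\le \frac{\Delta r_1-\Delta r_2}{m}<\frac{\sigma_1}{2}.$$ Let $\mathbf q_{21}=(\tilde r_1-\tilde r_2)/m$. Then: (1) if $\mathbf q_{21}\ge \sigma_1/2$, then $r_1>r_2$; (2) if $\mathbf q_{21}<-\sigma_1/2$, then $r_1<r_2$; (3) if $-\sigma_1/2\le \mathbf q_{21}<\sigma_1/2$, then $r_1=r_2$.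
   Context: $|a|_b$ denotes the remainder of the integer $a$ modulo the positive integer $b$ (in $[0,b)$). Erroneous remainders are integers $\tilde r_i$ with $0\le \tilde r_i<m_i$. *)

From HB Require Import structures.
From mathcomp Require Import all_boot all_order all_algebra.
Set Implicit Arguments. Unset Strict Implicit. Unset Printing Implicit Defensive.

(* Write [N = k1 (m G1) + r1 = k2 (m G2) + r2] and [G2 = q G1 + s] with
   [s = |G2|_G1].  Then [(r1 - r2) / m = k2 s - j G1] with [j = k1 - q k2 >= 0].
   The bound on [N] forces [k1 <= q t] with [t = G1 / s], so either [j = 0] and
   the difference is the multiple [k2 s] of [s], or [j >= 1], [k2 < t] and the
   difference is at most [s - G1 <= -s].  Hence the exact normalized difference
   is [0] or has absolute value at least [s = sigma1], and an error of size less
   than [sigma1 / 2] cannot move it across the thresholds [+-sigma1 / 2]. *)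
From HB Require Import structures.
From mathcomp Require Import all_boot all_order all_algebra.
From mathcomp Require Import zify ring lra.
Set Implicit Arguments. Unset Strict Implicit. Unset Printing Implicit Defensive.
Import Order.TTheory GRing.Theory Num.Theory.

Lemma remainder_gap_of_quotients (m G1 s q t k1 k2 r1 r2 : nat) :
  k1 * (m * G1) + r1 = k2 * (m * (q * G1 + s)) + r2 ->
  (q * k2 <= k1 <= q * t)%N -> (t * s <= G1)%N ->
  [\/ r1 = r2, (r2 + m * s <= r1)%N | (r1 + m * s <= r2)%N].
Proof.
move=> eqN /andP[qk2_le_k1 k1_le_qt] ts_le_G1.
have [j k1E] : exists j, k1 = q * k2 + j by exists (k1 - q * k2); lia.
subst k1; clear qk2_le_k1.
case: j eqN k1_le_qt => [|j] eqN k1_le_qt.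
  have -> : r1 = r2 + m * (k2 * s) by nia.
  by case: k2 {eqN k1_le_qt} => [|k2]; [constructor 1; lia | constructor 2; nia].
constructor 3.
have k2_lt_t : (k2 < t)%N by rewrite -(@ltn_pmul2l q); lia.
have : (k2.+1 * s <= G1)%N by apply: leq_trans ts_le_G1; rewrite leq_mul2r k2_lt_t orbT.
nia.
Qed.

Lemma modn_mul_gap (m G1 G2 N : nat) :
  (N < m * G1 * (1 + (G2 %/ G1) * (G1 %/ (G2 %% G1))))%N ->
  [\/ N %% (m * G1) = N %% (m * G2),
      (N %% (m * G2) + m * (G2 %% G1) <= N %% (m * G1))%N |
      (N %% (m * G1) + m * (G2 %% G1) <= N %% (m * G2))%N].
Proof.
set q := G2 %/ G1; set s := G2 %% G1; set t := G1 %/ s => N_lt.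
have mG1_gt0 : (0 < m * G1)%N by case: (m * G1) N_lt.
apply: (@remainder_gap_of_quotients m G1 s q t (N %/ (m * G1)) (N %/ (m * G2))).
- by rewrite -divn_eq -(divn_eq G2 G1) -divn_eq.
- apply/andP; split; last by rewrite -ltnS -addn1 addnC ltn_divLR // mulnC.
  rewrite leq_divRL // (leq_trans _ (leq_divM N (m * G2))) //.
  have qG1_le : (q * G1 <= G2)%N by exact: leq_divM.
  by rewrite (mulnC q) -!mulnA leq_mul2l mulnCA leq_mul2l qG1_le !orbT.
- exact: leq_divM.
Qed.

Lemma perturbed_trichotomy (R : realFieldType) (s a e : R) :
  [\/ a = 0, s <= a | a <= - s]%R -> (- (s / 2%:R) <= e < s / 2%:R)%R ->
  [/\ (s / 2%:R <= a + e -> 0 < a)%R, (a + e < - (s / 2%:R) -> a < 0)%R &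
      (- (s / 2%:R) <= a + e < s / 2%:R -> a = 0)%R].
Proof.
move=> gap /andP[e_ge e_lt].
by case: gap => [->|a_ge|a_le]; split=> //; try case/andP; lra.
Qed.

Theorem lemma2 (m G1 G2 N rt1 rt2 : nat) :
  (1 <= m)%N -> coprime G1 G2 -> (1 < G1)%N -> (G1 < G2)%N ->
  (2 <= G2 %% G1)%N ->
  (N < (m * G1) * (1 + ((m * G2) %/ (m * G1)) * ((m * G1) %/ ((m * G2) %% (m * G1)))))%N ->
  (rt1 < m * G1)%N -> (rt2 < m * G2)%N ->
  let r1 := (N %% (m * G1))%N in
  let r2 := (N %% (m * G2))%N in
  let sigma1 : rat := ((G2 %% G1)%N%:R)%R in
  let dr1 : rat := (rt1%:R - r1%:R)%R in
  let dr2 : rat := (rt2%:R - r2%:R)%R in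
  let q21 : rat := ((rt1%:R - rt2%:R) / m%:R)%R in
  (- (sigma1 / 2%:R) <= (dr1 - dr2) / m%:R < sigma1 / 2%:R)%R ->
  [/\ (sigma1 / 2%:R <= q21)%R -> (r1 > r2)%N,
      (q21 < - (sigma1 / 2%:R))%R -> (r1 < r2)%N &
      (- (sigma1 / 2%:R) <= q21 < sigma1 / 2%:R)%R -> r1 = r2].
Proof.
move=> m_gt0 _ _ _ _ N_lt _ _ r1 r2 sigma1 dr1 dr2 q21 err.
rewrite divnMl // -muln_modr divnMl // in N_lt.
have m_gt0R : (0 < m%:R :> rat)%R by rewrite ltr0n.
set a : rat := ((r1%:R - r2%:R) / m%:R)%R.
have -> : q21 = (a + (dr1 - dr2) / m%:R)%R.
  by rewrite /q21 /a /dr1 /dr2 -mulrDl; congr (_ / _)%R; ring.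
have gap : [\/ a = 0, sigma1 <= a | a <= - sigma1]%R.
  rewrite /a /sigma1 /r1 /r2; case: (modn_mul_gap N_lt) => [-> | le_r | le_r].
  - by constructor 1; rewrite subrr mul0r.
  - constructor 2; rewrite ler_pdivlMr //.
    by move: le_r; rewrite -(ler_nat rat) natrD natrM => le_r; lra.
  - constructor 3; rewrite ler_pdivrMr //.
    by move: le_r; rewrite -(ler_nat rat) natrD natrM => le_r; lra.
have [pos neg zero] := perturbed_trichotomy gap err.
split=> [/pos | /neg | /zero]; rewrite /a.
- by rewrite pmulr_lgt0 ?invr_gt0 // subr_gt0 ltr_nat.
- by rewrite pmulr_llt0 ?invr_gt0 // subr_lt0 ltr_nat.
- by move/eqP; rewrite mulf_eq0 invr_eq0 (gt_eqF m_gt0R) orbF subr_eq0 eqr_nat => /eqP.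
Qed.
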